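(* Let $m\ge1$ be an integer, $h\in\mathbb{R}$, and let $y_1,y_2,\dots$ be i.i.d. real random variables under a probability measure $\mathbb{P}_\infty$, where $y_i=\mathrm{LLR}(i)=\ln\big(f_1(x_i)/f_0(x_i)\big)$ with $x_1,x_2,\dots$ i.i.d. with density $f_0$ under $\mathbb{P}_\infty$. For $n\ge m$ let $S_n=\sum_{i=n-m+1}^{n}y_i$. Let $k\ge m$ and $N>k$ be integers. Then $$\mathbb{P}_\infty\Big(\bigcap_{i=k}^{k+N-1}\{S_i<h\}\Big)\ \ge\ \big[\mathbb{P}_\infty(S_m<h)\big]^N.$$
   Context: $f_0, f_1$ are probability density functions on $\mathbb{R}$ such that the log-likelihood ratios are well-defined real random variables. *)

From HB Require Import structures.
From mathcomp Require Import all_boot all_order all_algebra.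
From mathcomp Require Import all_classical all_reals all_analysis.
Set Implicit Arguments. Unset Strict Implicit. Unset Printing Implicit Defensive.
Import Order.TTheory GRing.Theory Num.Theory.
Local Open Scope classical_set_scope.
Local Open Scope ring_scope.

Definition is_pdf (R : realType) (f : R -> R) : Prop :=
  [/\ measurable_fun setT f, (forall z, 0 <= f z) &
      (\int[@lebesgue_measure R]_z (f z)%:E = 1)%E].

(* The sequence x_1, x_2, ... (indices >= 1; x 0 is irrelevant) is i.i.d.
   under P: each x_i is measurable, they are mutually independent (product
   rule over every finite family of distinct positive indices and Borel sets)
   and all have the same distribution as x_1. *)
Definition iid_seq (R : realType) (d : measure_display) (T : measurableType d)
    (P : probability T R) (x : nat -> T -> R) : Prop :=
  [/\ (forall i, (0 < i)%N -> measurable_fun setT (x i)),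
      (forall (I : seq nat) (B : nat -> set R),
          uniq I -> all (fun i => 0 < i)%N I ->
          (forall i, measurable (B i)) ->
          P (\bigcap_(i in [set` I]) (x i @^-1` B i)) =
          (\prod_(i <- I) P (x i @^-1` B i))%E) &
      (forall i (B : set R), (0 < i)%N -> measurable B ->
          P (x i @^-1` B) = P (x 1%N @^-1` B))].

Definition has_density (R : realType) (d : measure_display) (T : measurableType d)
    (P : probability T R) (X : T -> R) (f : R -> R) : Prop :=
  forall B : set R, measurable B ->
    P (X @^-1` B) = (\int[@lebesgue_measure R]_(z in B) (f z)%:E)%E.

Definition LLR (R : realType) (T : Type) (f0 f1 : R -> R) (x : nat -> T -> R)
    (i : nat) : T -> R :=
  fun t => ln (f1 (x i t) / f0 (x i t)).

Definition win_sum (R : realType) (T : Type) (m : nat) (y : nat -> T -> R)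
    (n : nat) : T -> R :=
  fun t => \sum_((n.+1 - m)%N <= i < n.+1) y i t.

From HB Require Import structures.
From mathcomp Require Import all_boot all_order all_algebra.
From mathcomp Require Import all_classical all_reals all_analysis.
From mathcomp Require Import ring lra zify.
Import Order.TTheory GRing.Theory Num.Theory numFieldNormedType.Exports.
Local Open Scope classical_set_scope.
Local Open Scope ring_scope.

Set Implicit Arguments. Unset Strict Implicit. Unset Printing Implicit Defensive.

(* The window events {S_i < h} are decreasing functions of the i.i.d. sequence
   y, so Harris' inequality makes them positively correlated, and each has
   probability P(S_m < h) by stationarity.  Harris' inequality is proved for
   finitely-valued coordinates, by induction on the number of coordinates with
   Chebyshev's sum inequality as the inductive step.  To reach general y_i, at
   level n every y_i is replaced by the upper end of its dyadic cell of width
   2^-n in [-n, n] (windows containing a value above n are discarded): these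
   quantized window events are decreasing in the finitely-valued codes, lie
   inside {S_i < h} and increase to it, so the bound passes to the limit by
   continuity of P from below. *)

Section IteratedExpectation.
Variables (R : realFieldType) (K : nat) (p : nat -> R).

(* [iter_expect L f] is the expectation of [f] at [L] independent draws from the
   law [p] on [{0, ..., K - 1}]. *)
Fixpoint iter_expect (L : nat) (f : seq nat -> R) : R :=
  if L is L'.+1 then \sum_(v < K) p v * iter_expect L' (fun s => f ((v : nat) :: s))
  else f [::].

Definition le_nth (s s' : seq nat) := forall j, (nth 0 s j <= nth 0 s' j)%N.

Definition seq_nonincreasing (L : nat) (f : seq nat -> R) :=
  forall s s', size s = L -> size s' = L -> le_nth s s' -> f s' <= f s.

Hypothesis p_ge0 : forall v, 0 <= p v.
Hypothesis p_sum1 : \sum_(v < K) p v = 1.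

Lemma ler_iter_expect L (f g : seq nat -> R) :
  (forall s, size s = L -> f s <= g s) -> iter_expect L f <= iter_expect L g.
Proof.
elim: L f g => [|L IH] f g fg /=; first exact: fg.
apply: ler_sum => v _; apply: ler_wpM2l => //; apply: IH => s sz.
by apply: fg; rewrite /= sz.
Qed.

Lemma iter_expect_cst L (c : R) : iter_expect L (fun _ => c) = c.
Proof.
elim: L => [|L IH] //=.
by under eq_bigr do rewrite IH; rewrite -mulr_suml p_sum1 mul1r.
Qed.

Lemma iter_expect_ge0 L (f : seq nat -> R) :
  (forall s, 0 <= f s) -> 0 <= iter_expect L f.
Proof.
elim: L f => [|L IH] f f0 /=; first exact: f0.
by apply: sumr_ge0 => v _; apply: mulr_ge0 => //; apply: IH.
Qed.

Lemma chebyshev_sum (F G : nat -> R) :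
  {homo F : u v / (u <= v)%N >-> v <= u} ->
  {homo G : u v / (u <= v)%N >-> v <= u} ->
  (\sum_(v < K) p v * F v) * (\sum_(v < K) p v * G v) <=
  \sum_(v < K) p v * (F v * G v).
Proof.
move=> F_dec G_dec.
set EF := \sum_(v < K) _; set EG := \sum_(v < K) _; set EFG := \sum_(v < K) _.
have cross_ge0 u v : 0 <= (F u - F v) * (G u - G v).
  have [uv|/ltnW vu] := leqP u v.
    by apply: mulr_ge0; rewrite subr_ge0; [apply: F_dec | apply: G_dec].
  by apply: mulr_le0; rewrite subr_le0; [apply: F_dec | apply: G_dec].
have double_sumE :
    \sum_(u < K) \sum_(v < K) p u * p v * ((F u - F v) * (G u - G v)) =
    2 * (EFG - EF * EG).
  transitivity (\sum_(u < K) \sum_(v < K) (p u * (F u * G u) * p v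
      + p u * (p v * (F v * G v)) - p u * F u * (p v * G v)
      - p u * G u * (p v * F v))).
    by apply: eq_bigr => u _; apply: eq_bigr => v _; ring.
  under eq_bigr do
    rewrite !big_split /= !sumrN -!big_distrr /=.
  rewrite !big_split /= !sumrN -!big_distrl /= p_sum1 /EF /EG /EFG; ring.
have : 0 <= \sum_(u < K) \sum_(v < K) p u * p v * ((F u - F v) * (G u - G v)).
  apply: sumr_ge0 => u _; apply: sumr_ge0 => v _.
  exact: mulr_ge0 (mulr_ge0 (p_ge0 u) (p_ge0 v)) (cross_ge0 u v).
rewrite double_sumE; lra.
Qed.

Lemma seq_nonincreasing_cons L (f : seq nat -> R) v :
  seq_nonincreasing L.+1 f -> seq_nonincreasing L (fun s => f (v :: s)).
Proof.
move=> f_dec s s' sz sz' ss'; apply: f_dec; rewrite /= ?sz ?sz' //.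
by case.
Qed.

Lemma iter_expect_cons_nonincreasing L (f : seq nat -> R) :
  seq_nonincreasing L.+1 f ->
  {homo (fun v => iter_expect L (fun s => f (v :: s))) :
     u v / (u <= v)%N >-> v <= u}.
Proof.
move=> f_dec u v uv; apply: ler_iter_expect => s sz.
by apply: f_dec; rewrite /= ?sz //; case.
Qed.

Lemma harris_iter_expect L (f g : seq nat -> R) :
  seq_nonincreasing L f -> seq_nonincreasing L g ->
  iter_expect L f * iter_expect L g <= iter_expect L (fun s => f s * g s).
Proof.
elim: L f g => [|L IH] f g f_dec g_dec //=.
apply: le_trans (chebyshev_sum (iter_expect_cons_nonincreasing f_dec)
                               (iter_expect_cons_nonincreasing g_dec)) _.
apply: ler_sum => v _; apply: ler_wpM2l => //.
exact: IH (seq_nonincreasing_cons _ f_dec) (seq_nonincreasing_cons _ g_dec).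
Qed.

Lemma harris_iter_expect_all L (C : nat -> seq nat -> bool) (I : seq nat) :
  (forall i, seq_nonincreasing L (fun s => (C i s)%:R)) ->
  \prod_(i <- I) iter_expect L (fun s => (C i s)%:R) <=
  iter_expect L (fun s => (all (C ^~ s) I)%:R).
Proof.
move=> C_dec; elim: I => [|i I IH]; first by rewrite big_nil iter_expect_cst.
have all_dec : seq_nonincreasing L (fun s => (all (C ^~ s) I)%:R).
  move=> s s' sz sz' ss'; rewrite ler_nat.
  case/boolP: (all (C^~ s') I) => // /allP C's.
  suff -> : all (C^~ s) I by [].
  apply/allP => j jI; have := C_dec j s s' sz sz' ss'.
  by rewrite ler_nat (C's j jI) lt0b.
rewrite big_cons.
apply: le_trans (ler_wpM2l (iter_expect_ge0 _ _) IH) _ => [s|].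
  exact: ler0n.
apply: le_trans (harris_iter_expect (C_dec i) all_dec) _.
by apply: ler_iter_expect => s _ /=; rewrite -natrM mulnb.
Qed.

End IteratedExpectation.

Section DyadicQuantization.
Variable R : realType.
Implicit Types (y : R) (n c : nat) (ys : nat -> R).

(* Level [n] cuts [[-n, n]] into cells of width [2^-n]; a real [y <= n] gets the
   index of its cell (values below [-n] share cell [0]), every [y > n] gets
   the overflow code [code_max n], and [dyad_ub n c] is the upper end of
   cell [c]. *)
Definition code_max n : nat := (2 * n * 2 ^ n).+1.

Definition dyad_code n y : nat :=
  if y <= n%:R then Num.truncn ((y + n%:R) * (2 ^ n)%:R) else code_max n.

Definition dyad_ub n c : R := - n%:R + c.+1%:R / (2 ^ n)%:R.

Lemma pow2n_gt0 n : 0 < (2 ^ n)%:R :> R.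
Proof. by rewrite ltr0n expn_gt0. Qed.

Lemma dyad_code_le_max n y : (dyad_code n y <= code_max n)%N.
Proof.
rewrite /dyad_code; case: ifP => // yn; rewrite leqW // truncn_le_nat.
have := pow2n_gt0 n; rewrite -natr1 !natrM; nra.
Qed.

Lemma dyad_code_lt_max n y : (dyad_code n y < code_max n)%N = (y <= n%:R).
Proof.
rewrite /dyad_code; case: ifP => yn; last by rewrite ltnn.
rewrite ltnS truncn_le_nat.
have := pow2n_gt0 n; rewrite -natr1 !natrM; nra.
Qed.

Lemma dyad_code_mono n : {homo dyad_code n : y y' / y <= y' >-> (y <= y')%N}.
Proof.
move=> y y' yy'; rewrite /dyad_code; case: ifP => yn; case: ifP => y'n //.
- apply: le_truncn; rewrite ler_wpM2r ?lerD2r // ltW // pow2n_gt0.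
- by have := dyad_code_le_max n y; rewrite /dyad_code yn.
- by move: yn; rewrite (le_trans yy' y'n).
Qed.

Lemma dyad_ub_mono n : {homo dyad_ub n : c c' / (c <= c')%N >-> c <= c'}.
Proof.
by move=> c c' cc'; rewrite lerD2l ler_pM2r ?invr_gt0 ?pow2n_gt0 // ler_nat.
Qed.

Lemma lt_dyad_ub n y : y <= n%:R -> y < dyad_ub n (dyad_code n y).
Proof.
move=> yn; rewrite /dyad_code yn /dyad_ub.
have e0 := pow2n_gt0 n; have ht := truncnS_gt ((y + n%:R) * (2 ^ n)%:R).
rewrite -(ltr_pM2r e0) mulrDl mulNr divfK ?gt_eqF //; nra.
Qed.

Lemma dyad_ub_le n y : - n%:R <= y -> y <= n%:R ->
  dyad_ub n (dyad_code n y) <= y + (2 ^ n)%:R^-1.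
Proof.
move=> ny yn; rewrite /dyad_code yn /dyad_ub.
have e0 := pow2n_gt0 n.
have h0 : 0 <= (y + n%:R) * (2 ^ n)%:R by apply: mulr_ge0; [lra | exact: ltW].
have /andP[ht _] := truncn_itv h0; set t := Num.truncn _ in ht *.
rewrite -(ler_pM2r e0) !mulrDl mulNr divfK ?gt_eqF // mulVf ?gt_eqF // -natr1.
nra.
Qed.

(* Refining from level [n] to [n.+1] splits each cell in two, so the upper
   bound can only decrease. *)
Lemma dyad_ub_succ_le n y : y <= n%:R ->
  dyad_ub n.+1 (dyad_code n.+1 y) <= dyad_ub n (dyad_code n y).
Proof.
move=> yn; have yn1 : y <= n.+1%:R by rewrite -natr1; lra.
rewrite /dyad_code yn yn1 /dyad_ub.
have e0 := pow2n_gt0 n; set E := (2 ^ n)%:R : R.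
set t := Num.truncn ((y + n%:R) * E); set t' := Num.truncn _.
have := truncnS_gt ((y + n%:R) * E); rewrite -/t -natr1 => ht.
have t't : (t' <= 2 * 2 ^ n + 2 * t + 1)%N.
  rewrite /t' truncn_le_nat expnS (natrM R 2 (2 ^ n)) -/E -natr1.
  nra.
have t't_R : t'.+1%:R <= 2 * E + 2 * t%:R + 2 :> R.
  have -> : 2 * E + 2 * t%:R + 2 = (2 * 2 ^ n + 2 * t + 2)%N%:R :> R.
    by rewrite !(natrD R) -/E; ring.
  by rewrite ler_nat; lia.
rewrite expnS (natrM R 2 (2 ^ n)) -/E.
have : t'.+1%:R / (2 * E) <= (2 * E + 2 * t%:R + 2) / (2 * E).
  by rewrite ler_pM2r // invr_gt0 mulr_gt0.
have -> : (2 * E + 2 * t%:R + 2) / (2 * E) = 1 + t.+1%:R / E.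
  by rewrite -natr1; field; rewrite gt_eqF.
rewrite -[n.+1%:R]natr1; lra.
Qed.

Definition dyad_codes n (ys : nat -> R) (m : nat) : seq nat :=
  [seq dyad_code n (ys j) | j <- iota 0 m].

Lemma nth_dyad_codes n ys m j :
  (j < m)%N -> nth 0 (dyad_codes n ys m) j = dyad_code n (ys j).
Proof. by move=> jm; rewrite (nth_map 0) ?size_iota ?nth_iota. Qed.

Variables (m : nat) (h : R).

Definition dyad_window_lt n (s : seq nat) : bool :=
  [forall j : 'I_m, (nth 0 s j < code_max n)%N] &&
  (\sum_(j < m) dyad_ub n (nth 0 s j) < h).

Lemma dyad_window_lt_take n s : dyad_window_lt n (take m s) = dyad_window_lt n s.
Proof.
rewrite /dyad_window_lt; congr andb.
  by apply: eq_forallb => j; rewrite nth_take.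
by congr (_ < h); apply: eq_bigr => j _; rewrite nth_take.
Qed.

Lemma dyad_window_lt_nonincreasing n L r :
  seq_nonincreasing L (fun s => (dyad_window_lt n (drop r s))%:R : R).
Proof.
move=> s s' _ _ ss'; rewrite ler_nat.
case/boolP: (dyad_window_lt _ _) => // /andP[/forallP s'_lt s'_sum].
have le_drop j : (nth 0 (drop r s) j <= nth 0 (drop r s') j)%N by rewrite !nth_drop.
rewrite lt0b; apply/andP; split.
  by apply/forallP => j; apply: leq_ltn_trans (le_drop j) (s'_lt j).
by apply: le_lt_trans s'_sum; apply: ler_sum => j _; apply: dyad_ub_mono.
Qed.

Lemma sum_lt_of_dyad_window_lt n ys :
  dyad_window_lt n (dyad_codes n ys m) -> \sum_(j < m) ys j < h.
Proof.
move=> /andP[/forallP codes_lt]; apply: le_lt_trans; apply: ler_sum => j _.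
have := codes_lt j; rewrite !nth_dyad_codes // dyad_code_lt_max => yjn.
exact/ltW/lt_dyad_ub.
Qed.

Lemma dyad_window_lt_succ n ys :
  dyad_window_lt n (dyad_codes n ys m) ->
  dyad_window_lt n.+1 (dyad_codes n.+1 ys m).
Proof.
move=> /andP[/forallP codes_lt sum_lt].
have yn (j : 'I_m) : ys j <= n%:R.
  by have := codes_lt j; rewrite nth_dyad_codes // dyad_code_lt_max.
apply/andP; split.
  apply/forallP => j; rewrite nth_dyad_codes // dyad_code_lt_max.
  by have := yn j; rewrite -natr1; lra.
apply: le_lt_trans sum_lt; apply: ler_sum => j _.
by rewrite !nth_dyad_codes //; apply: dyad_ub_succ_le.
Qed.

(* Once [n] exceeds every [|ys j|] and [m 2^-n] is below the slack
   [h - \sum_j ys j], every quantized value is in range and overshoots [ys j]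
   by at most [2^-n]. *)
Lemma dyad_window_lt_exhaust ys : (0 < m)%N -> \sum_(j < m) ys j < h ->
  exists n, dyad_window_lt n (dyad_codes n ys m).
Proof.
move=> m_gt0 sum_lt; set S := \sum_(j < m) ys j.
have mR : 0 < m%:R :> R by rewrite ltr0n.
set dl := (h - S) / m%:R.
have dl_gt0 : 0 < dl by rewrite /dl divr_gt0 // subr_gt0.
set M := \sum_(j < m) `|ys j| + dl^-1.
have [n Mn] : exists n : nat, M < n%:R.
  by exists (Num.truncn M).+1; exact: truncnS_gt.
exists n.
have abs_le_M (j : 'I_m) : `|ys j| <= M.
  rewrite /M (bigD1 j) //=.
  have : 0 <= \sum_(i < m | i != j) `|ys i| by apply: sumr_ge0.
  have : 0 <= dl^-1 by rewrite invr_ge0 ltW.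
  lra.
have yn (j : 'I_m) : - n%:R <= ys j <= n%:R.
  by rewrite -ler_norml; have := abs_le_M j; lra.
have cell_lt_dl : (2 ^ n)%:R^-1 < dl.
  have dlV_lt : dl^-1 < (2 ^ n)%:R.
    have : dl^-1 <= M by rewrite /M lerDr sumr_ge0.
    have : n%:R < (2 ^ n)%:R :> R by rewrite ltr_nat ltn_expl.
    lra.
  by rewrite -(ltf_pV2 _ _) ?invrK ?posrE ?invr_gt0 ?pow2n_gt0.
apply/andP; split.
  apply/forallP => j; rewrite nth_dyad_codes // dyad_code_lt_max.
  by have /andP[] := yn j.
apply: (@le_lt_trans _ _ (\sum_(j < m) (ys j + (2 ^ n)%:R^-1))).
  apply: ler_sum => j _; rewrite nth_dyad_codes //.
  by have /andP[] := yn j; apply: dyad_ub_le.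
rewrite big_split /= -/S sumr_const card_ord -mulr_natl.
have : m%:R * dl = h - S by rewrite /dl mulrC divfK ?gt_eqF.
nra.
Qed.

End DyadicQuantization.

Section CodeEvents.
Variables (R : realType) (d : measure_display) (T : measurableType d).
Variables (P : probability T R) (x : nat -> T -> R).
Variables (K : nat) (kap : R -> nat).
Hypothesis x_iid : iid_seq P x.
Hypothesis kap_lt : forall z, (kap z < K)%N.
Hypothesis kap_measurable : forall v, measurable (kap @^-1` [set v]).

Definition codes (a L : nat) (t : T) : seq nat := [seq kap (x j t) | j <- iota a L].

Definition code_event (a L : nat) (f : pred (seq nat)) : set T :=
  [set t | f (codes a L t)].

Definition cylinder (J : seq nat) (D : nat -> set R) : set T :=
  \bigcap_(j in [set` J]) (x j @^-1` D j).

Definition code_prob (v : nat) : R := fine (P (x 1%N @^-1` (kap @^-1` [set v]))).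

Let x_measurable i : (0 < i)%N -> measurable_fun setT (x i).
Proof. by case: x_iid => mx _ _; apply: mx. Qed.

Lemma measurable_x_preimage i B :
  (0 < i)%N -> measurable B -> measurable (x i @^-1` B).
Proof.
by move=> i_gt0 mB; rewrite -[X in measurable X]setTI; apply: x_measurable.
Qed.

Lemma take_drop_codes a L r n t :
  (r + n <= L)%N -> take n (drop r (codes a L t)) = codes (a + r) n t.
Proof.
move=> rnL; rewrite /codes -map_drop -map_take drop_iota take_iota.
by congr (map _ (iota _ _)); apply/minn_idPl; lia.
Qed.

Lemma code_event_cons a L f :
  code_event a L.+1 f = \bigcup_(v < K)
    (x a @^-1` (kap @^-1` [set v]) `&` code_event a.+1 L (fun s => f (v :: s))).
Proof.
apply/seteqP; split => t /=; last by move=> [v _ [/= <-]].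
by move=> ft; exists (kap (x a t)); [exact: kap_lt | split].
Qed.

Lemma code_event0 a f : code_event a 0 f = if f [::] then setT else set0.
Proof. by rewrite /code_event /codes /=; case: (f [::]); apply/seteqP; split. Qed.

Lemma measurable_code_event a L f : (0 < a)%N -> measurable (code_event a L f).
Proof.
elim: L a f => [|L IH] a f a_gt0; first by rewrite code_event0; case: (f [::]).
rewrite code_event_cons; apply: bigcup_measurable => v _.
by apply: measurableI; [apply: measurable_x_preimage | apply: IH].
Qed.

Lemma measurable_cylinder J D : all (fun j => 0 < j)%N J ->
  (forall j, measurable (D j)) -> measurable (cylinder J D).
Proof.
move=> /allP J_gt0 mD; apply: bigcap_measurableType => j /= jJ.
by apply: measurable_x_preimage; [apply: J_gt0 | apply: mD].
Qed.

Lemma cylinder_cons a J D B : a \notin J ->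
  cylinder (a :: J) (fun j => if j == a then B else D j) =
  x a @^-1` B `&` cylinder J D.
Proof.
move=> aJ; have neq_a j : j \in J -> (j == a) = false.
  by move=> jJ; apply/eqP => ja; rewrite -ja jJ in aJ.
apply/seteqP; split => t /=.
  move=> xt; split; first by have := xt a; rewrite eqxx; apply; rewrite /= inE eqxx.
  by move=> j /= jJ; have := xt j; rewrite neq_a //; apply; rewrite /= inE jJ orbT.
move=> [xat xt] j /=; rewrite inE => /orP[/eqP ->|jJ]; first by rewrite eqxx.
by rewrite neq_a //; apply: xt.
Qed.

Lemma prob_preimage_cylinder a J D B : (0 < a)%N -> a \notin J -> uniq J ->
  all (fun j => 0 < j)%N J -> (forall j, measurable (D j)) -> measurable B ->
  P (x a @^-1` B `&` cylinder J D) =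
  (P (x 1%N @^-1` B) * P (cylinder J D))%E.
Proof.
move=> a_gt0 aJ uJ J_gt0 mD mB; case: x_iid => _ indep ident.
have mDB j : measurable (if j == a then B else D j) by case: (j == a).
rewrite -cylinder_cons // /cylinder indep /= ?a_gt0 ?aJ //.
rewrite big_cons eqxx ident // indep //; congr (_ * _)%E.
apply: eq_big_seq => j jJ.
by have -> : (j == a) = false by apply/eqP => ja; rewrite -ja jJ in aJ.
Qed.

Lemma code_prob_ge0 v : 0 <= code_prob v.
Proof. exact/fine_ge0/measure_ge0. Qed.

Lemma cylinder_code_event_cons a L f J D :
  cylinder J D `&` code_event a L.+1 f = \big[setU/set0]_(v < K)
    (x a @^-1` (kap @^-1` [set v : nat]) `&` cylinder J D `&`
     code_event a.+1 L (fun s => f ((v : nat) :: s))).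
Proof.
rewrite -(bigcup_mkord K (fun v => x a @^-1` (kap @^-1` [set v]) `&` cylinder J D
                                   `&` code_event a.+1 L (fun s => f (v :: s)))).
rewrite code_event_cons; apply/seteqP; split => t /=.
  by move=> [Jt [v vK [Av Et]]]; exists v.
by move=> [v vK [[Av Jt] Et]]; split => //; exists v.
Qed.

Lemma prob_cylinder_code_event L a f J D : (0 < a)%N -> uniq J ->
  all (fun j => 0 < j < a)%N J -> (forall j, measurable (D j)) ->
  P (cylinder J D `&` code_event a L f) =
  (P (cylinder J D) * (iter_expect K code_prob L (fun s => (f s)%:R))%:E)%E.
Proof.
elim: L a f J D => [|L IH] a f J D a_gt0 uJ J_lt mD.
  rewrite code_event0 /=; case: (f [::]); first by rewrite setIT mule1.
  by rewrite setI0 measure0 mule0.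
have J_gt0 : all (fun j => 0 < j)%N J by apply/allP => j /(allP J_lt) /andP[].
have aJ : a \notin J by apply/negP => /(allP J_lt); rewrite ltnn andbF.
have aJ_lt : all (fun j => 0 < j < a.+1)%N (a :: J).
  apply/allP => j; rewrite inE => /orP[/eqP ->|/(allP J_lt) /andP[-> /ltnW]] //.
  by rewrite a_gt0 /=.
have fin_cyl : P (cylinder J D) \is a fin_num.
  exact/fin_num_measure/measurable_cylinder.
pose F (v : nat) := x a @^-1` (kap @^-1` [set v]) `&` cylinder J D `&`
                    code_event a.+1 L (fun s => f (v :: s)).
have mF v : measurable (F v).
  apply: measurableI; last exact: measurable_code_event.
  apply: measurableI; first exact: measurable_x_preimage.
  exact: measurable_cylinder.
have F_disj : trivIset setT F by move=> u v _ _ [t [[[/= <- _] _] [[/= -> _] _]]].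
(* Fixing the code [v] of [x a] adds the independent factor [x a] to the
   cylinder, which is what the induction hypothesis allows. *)
have PF (v : 'I_K) : P (F v) =
    (fine (P (cylinder J D)) * (code_prob v *
       iter_expect K code_prob L (fun s => (f ((v : nat) :: s))%:R)))%:E.
  have mDv j : measurable (if j == a then kap @^-1` [set v : nat] else D j).
    by case: (j == a).
  rewrite /F -cylinder_cons // IH //=; last by rewrite aJ.
  rewrite cylinder_cons // prob_preimage_cylinder // !EFinM fineK //.
  rewrite /code_prob fineK; last exact/fin_num_measure/measurable_x_preimage.
  by rewrite muleA (muleC (P (cylinder J D))).
rewrite cylinder_code_event_cons (measure_bigsetU P mF F_disj).
by rewrite (eq_bigr _ (fun v _ => PF v)) sumEFin -mulr_sumr EFinM fineK.
Qed.

Lemma prob_code_event L a f : (0 < a)%N ->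
  P (code_event a L f) = (iter_expect K code_prob L (fun s => (f s)%:R))%:E.
Proof.
move=> a_gt0.
have := prob_cylinder_code_event L f (D := fun=> setT) a_gt0
  (erefl : uniq [::]) erefl.
by rewrite /cylinder set_nil bigcap_set0 setTI probability_setT mul1e; apply.
Qed.

Lemma sum_code_prob : \sum_(v < K) code_prob v = 1.
Proof.
have := prob_code_event 1 predT (ltn0Sn 0).
rewrite (_ : code_event _ _ _ = setT); last by apply/seteqP; split.
rewrite probability_setT /= => /eqP; rewrite eqe => /eqP ->.
by apply: eq_bigr => v _; rewrite mulr1.
Qed.
End CodeEvents.

Lemma win_sumE (R : realType) (T : Type) m (y : nat -> T -> R) i t :
  (m <= i.+1)%N -> win_sum m y i t = \sum_(j < m) y (i.+1 - m + j)%N t.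
Proof.
move=> mi; rewrite /win_sum; set a := (i.+1 - m)%N.
have -> : i.+1 = (a + m)%N by rewrite /a subnK.
rewrite -{1}[a]add0n big_addn addKn big_mkord.
by apply: eq_bigr => j _; rewrite addnC.
Qed.

Lemma exprn_le_of_cvg (R : realType) (u : nat -> R) (a b : R) (N : nat) :
  u @ \oo --> a -> (forall n, u n ^+ N <= b) -> a ^+ N <= b.
Proof.
move=> u_a ub; have uN_aN : (fun n => u n ^+ N) @ \oo --> a ^+ N.
  exact: continuous_cvg _ (@exprn_continuous R N a) u_a.
by apply: ler_cvg_to uN_aN (cvg_cst b) _; apply: nearW.
Qed.

(* For [z != 0], [expR (- ln (z ^+ 2)) = z ^- 2]; at [z = 0] both sides of the
   rewriting vanish, as [0^-1 = 0]. *)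
Lemma measurable_inv (R : realType) : measurable_fun [set: R] (@GRing.inv R).
Proof.
rewrite (_ : GRing.inv = fun z : R => z * expR (- ln (z ^+ 2))); last first.
  apply/funext => z; have [->|z0] := eqVneq z 0; first by rewrite invr0 mul0r.
  rewrite expRN lnK ?posrE ?exprn_even_gt0 ?z0 ?orbT //.
  by rewrite expr2 invfM mulrA mulfV // mul1r.
apply: measurable_realfun.measurable_funM => //.
by do 3!apply: measurableT_comp => //.
Qed.

Section WindowSums.
Variables (R : realType) (d : measure_display) (T : measurableType d).
Variables (P : probability T R) (x : nat -> T -> R) (g : R -> R).
Hypothesis x_iid : iid_seq P x.
Hypothesis g_measurable : measurable_fun setT g.
Variables (m : nat) (h : R).
Hypothesis m_gt0 : (0 < m)%N.

Let y i t := g (x i t).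
Let S := win_sum m y.

Definition quant n (z : R) : nat := dyad_code n (g z).

Definition approx_event n a : set T :=
  code_event x (quant n) a m (dyad_window_lt m h n).

Lemma quant_lt n z : (quant n z < (code_max n).+1)%N.
Proof. by rewrite ltnS dyad_code_le_max. Qed.

Lemma measurable_quant_preimage n v : measurable (quant n @^-1` [set v] : set R).
Proof.
have m_code : measurable_fun setT (fun r : R => (dyad_code n r)%:R : R).
  apply: measurable_realfun.nondecreasing_measurable => // u u' uu'.
  by rewrite ler_nat dyad_code_mono.
have m_quant : measurable_fun setT (fun z => (quant n z)%:R : R).
  exact: measurableT_comp m_code g_measurable.
rewrite (_ : _ @^-1` _ = (fun z => (quant n z)%:R : R) @^-1` [set v%:R]).
  by rewrite -[X in measurable X]setTI; apply: m_quant.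
by apply/seteqP; split => z /= => [<-|/eqP]; rewrite ?eqr_nat => // /eqP.
Qed.

Lemma codes_quant n a L t :
  codes x (quant n) a L t = dyad_codes n (fun j => y (a + j)%N t) L.
Proof. by rewrite /codes /dyad_codes -[a]addn0 iotaDl -map_comp addn0. Qed.

Let measurable_quant_event n :=
  measurable_code_event x_iid (@quant_lt n) (measurable_quant_preimage n).

Lemma measurable_approx_event n a : (0 < a)%N -> measurable (approx_event n a).
Proof. exact: measurable_quant_event. Qed.

Lemma approx_event_sub n i : (m <= i)%N ->
  approx_event n (i.+1 - m) `<=` [set t | S i t < h].
Proof.
move=> mi t; rewrite /approx_event /code_event /= codes_quant /S win_sumE ?leqW //.
exact: sum_lt_of_dyad_window_lt.
Qed.

Lemma approx_event_succ n a : approx_event n a `<=` approx_event n.+1 a.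
Proof.
move=> t; rewrite /approx_event /code_event /= !codes_quant.
exact: dyad_window_lt_succ.
Qed.

Lemma window_event_bigcup i : (m <= i)%N ->
  [set t | S i t < h] = \bigcup_n approx_event n (i.+1 - m).
Proof.
move=> mi; apply/seteqP; split => [t|t [n _]]; last exact: approx_event_sub.
rewrite /= /S win_sumE ?leqW //.
move=> /(@dyad_window_lt_exhaust _ _ _ (fun j => y (i.+1 - m + j) t) m_gt0) [n Wn].
by exists n => //; rewrite /approx_event /code_event /= codes_quant.
Qed.

Lemma measurable_window_event i : (m <= i)%N -> measurable [set t | S i t < h].
Proof.
move=> mi; rewrite window_event_bigcup //; apply: bigcupT_measurable => n.
by apply: measurable_approx_event; rewrite subn_gt0.
Qed.

Lemma measurable_window_events_cap k N : (m <= k)%N ->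
  measurable (\bigcap_(i in [set i | (k <= i < k + N)%N]) [set t | S i t < h]).
Proof.
move=> mk; apply: bigcap_measurableType => i /andP[ki _].
by apply: measurable_window_event; lia.
Qed.

Lemma approx_event_shift n a L r : (r + m <= L)%N ->
  code_event x (quant n) a L (fun s => dyad_window_lt m h n (drop r s)) =
  approx_event n (a + r).
Proof.
move=> rmL; apply: eq_set => t.
by rewrite -dyad_window_lt_take take_drop_codes.
Qed.

Let prob_quant_event n :=
  prob_code_event x_iid (@quant_lt n) (measurable_quant_preimage n).

Lemma prob_approx_event n a :
  (0 < a)%N -> P (approx_event n a) = P (approx_event n 1).
Proof. by move=> a_gt0; rewrite /approx_event !prob_quant_event. Qed.

(* The [N] windows [k, ..., k + N - 1] only involve the [N + m] coordinates
   starting at [k + 1 - m], and their quantized events are decreasing in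
   these coordinates. *)
Lemma prob_approx_event_exprn_le n k N : (m <= k)%N ->
  (((fine (P (approx_event n 1))) ^+ N)%:E <=
   P (\bigcap_(i in [set i | (k <= i < k + N)%N]) [set t | (S i t < h)%R]))%E.
Proof.
move=> mk; set a := (k.+1 - m)%N; set L := (N + m)%N.
have a_gt0 : (0 < a)%N by rewrite subn_gt0.
pose W r s := dyad_window_lt m h n (drop r s).
pose E := code_event x (quant n) a L (fun s => all (W ^~ s) (iota 0 N)).
have E_sub : E `<=` \bigcap_(i in [set i | (k <= i < k + N)%N]) [set t | S i t < h].
  move=> t Et i /andP[ki ikN]; apply: (@approx_event_sub n i); first lia.
  have -> : (i.+1 - m = a + (i - k))%N by lia.
  rewrite -(@approx_event_shift n a L); last lia.
  by move/allP: Et; apply; rewrite mem_iota; lia.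
apply: (@le_trans _ _ (P E)); last first.
  apply: le_measure E_sub; rewrite inE; last exact: measurable_window_events_cap.
  exact: measurable_quant_event.
rewrite [P E]prob_quant_event // lee_fin.
have p_sum1 := sum_code_prob x_iid (@quant_lt n) (measurable_quant_preimage n).
apply: le_trans (harris_iter_expect_all (code_prob_ge0 P x (quant n)) p_sum1
                   (iota 0 N) (fun r => dyad_window_lt_nonincreasing m h n r)).
rewrite (eq_big_seq (fun=> fine (P (approx_event n 1)))).
  by rewrite big_const_seq count_predT size_iota iter_mulr mulr1.
move=> r; rewrite mem_iota add0n => rN.
rewrite -(prob_approx_event n (_ : 0 < a + r)%N) ?addn_gt0 ?a_gt0 //.
rewrite -(@approx_event_shift n a L r); last lia.
by rewrite prob_quant_event.
Qed.

Theorem window_sums_harris k N : (m <= k)%N ->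
  (((fine (P [set t | (S m t < h)%R])) ^+ N)%:E <=
   P (\bigcap_(i in [set i | (k <= i < k + N)%N]) [set t | (S i t < h)%R]))%E.
Proof.
move=> mk.
have m_approx n : measurable (approx_event n 1) by exact: measurable_approx_event.
have approx_cvg : (fun n => P (approx_event n 1)) @ \oo --> P [set t | S m t < h].
  rewrite (window_event_bigcup (leqnn m)) subSnn.
  apply: nondecreasing_cvg_mu => //; first exact: bigcupT_measurable.
  by apply/nondecreasing_seqP => n; rewrite subsetEset; apply: approx_event_succ.
have fin_cap := fin_num_measure P _ (measurable_window_events_cap N mk).
rewrite -(fineK fin_cap) lee_fin.
apply: (@exprn_le_of_cvg _ (fine \o (fun n => P (approx_event n 1)))).
  apply: fine_cvg; rewrite fineK //.
  exact/fin_num_measure/measurable_window_event.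
by move=> n; rewrite -lee_fin fineK // prob_approx_event_exprn_le.
Qed.

End WindowSums.

Theorem lemma1 (R : realType) (d : measure_display) (T : measurableType d)
    (P : probability T R) (f0 f1 : R -> R) (x : nat -> T -> R)
    (m : nat) (h : R) (k N : nat) :
  is_pdf f0 -> is_pdf f1 ->
  iid_seq P x -> has_density P (x 1%N) f0 ->
  (1 <= m)%N -> (m <= k)%N -> (k < N)%N ->
  let S := win_sum m (LLR f0 f1 x) in
  (((fine (P [set t | (S m t < h)%R])) ^+ N)%:E <=
    P (\bigcap_(i in [set i | (k <= i < k + N)%N]) [set t | (S i t < h)%R]))%E.
Proof.
move=> [mf0 _ _] [mf1 _ _] x_iid _ m_gt0 mk _; cbv zeta.
have llr_measurable : measurable_fun setT (fun z : R => ln (f1 z / f0 z)).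
  apply: measurableT_comp => //; apply: measurable_realfun.measurable_funM => //.
  exact: measurableT_comp (@measurable_inv R) mf0.
exact: (window_sums_harris (g := fun z => ln (f1 z / f0 z))).
Qed.
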